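(* Let $\pi \triangleright \Gamma \vdash^{(m,e)} t : L$ be a type derivation in the silly multi type system, with $L$ a linear type. (1) If $t \to_{wm} u$ then $m\geq 1$ and there is a derivation $\rho \triangleright \Gamma\vdash^{(m',e)} u : L$ with $m > m'$. (2) If $t\to_{we} u$ then $e\geq 1$ and there is a derivation $\rho\triangleright \Gamma\vdash^{(m,e')} u : L$ with $e>e'$. (3) If $t\to_{wgcv} u$ then there is a derivation $\rho\triangleright\Gamma\vdash^{(m,e)} u : L$ with $|\pi|>|\rho|$.
   Context: Terms: $t ::= x \mid \lambda x.t \mid t\,u \mid t[x\backslash u]$ ($t[x\backslash u]$ an explicit substitution binding $x$ in $t$; terms up to $\alpha$). Values $v ::= \lambda x.t$. Substitution contexts $S ::= \langle\cdot\rangle\mid S[x\backslash u]$. Weak contexts $W ::= \langle\cdot\rangle \mid W\,t \mid t\,W \mid t[x\backslash W] \mid W[x\backslash u]$; $W\langle\langle t\rangle\rangle$ is plugging without capture of free variables of $t$. Root rules: $S\langle\lambda x.t\rangle u\mapsto_m S\langle t[x\backslash u]\rangle$; $W\langle\langle x\rangle\rangle[x\backslash u]\mapsto_e W\langle\langle u\rangle\rangle[x\backslash u]$; $t[x\backslash S\langle v\rangle]\mapsto_{gcv} S\langle t\rangle$ if $x\notin\mathrm{fv}(t)$. $\to_{wm},\to_{we},\to_{wgcv}$ are their closures under weak contexts. Silly multi types: linear types $L ::= \mathtt{n} \mid M\multimap L$; multi types $M ::= [L_i]_{i\in I}$ finite multisets ($\mathbf{0}$ the empty one, $\uplus$ multiset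 sum). A type context $\Gamma$ maps variables to multi types, with finite domain $\{x\mid \Gamma(x)\neq\mathbf{0}\}$; $\uplus$ extends pointwise; $\Gamma\setminus\!\!\setminus x$ is $\Gamma$ with $x$ mapped to $\mathbf{0}$. Judgements $\Gamma\vdash^{(m,e)} t : T$ with $T$ linear or multi. Rules: (ax) $x:[L]\vdash^{(0,1)} x:L$; (many) from $(\Gamma_i\vdash^{(m_i,e_i)} t : L_i)_{i\in I}$, $I$ finite possibly empty, infer $\uplus_i\Gamma_i\vdash^{(\sum m_i,\sum e_i)} t : [L_i]_{i\in I}$; ($\mathrm{ax}_\lambda$) $\vdash^{(0,0)}\lambda x.t:\mathtt{n}$ with empty context; ($\lambda$) from $\Gamma\vdash^{(m,e)}t:L$ infer $\Gamma\setminus\!\!\setminus x\vdash^{(m,e)}\lambda x.t:\Gamma(x)\multimap L$; (@) from $\Gamma\vdash^{(m,e)} t : M\multimap L$ and $\Delta\vdash^{(m',e')} u : M\uplus[\mathtt{n}]$ infer $\Gamma\uplus\Delta\vdash^{(m+m'+1,e+e')} tu : L$; (ES) from $\Gamma\vdash^{(m,e)} t:L$ and $\Delta\vdash^{(m',e')}u:\Gamma(x)\uplus[\mathtt{n}]$ infer $(\Gamma\setminus\!\!\setminus x)\uplus\Delta\vdash^{(m+m',e+e')} t[x\backslash u]:L$. The size $|\pi|$ of a derivation is its number of rule instances other than (many). *)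

From Stdlib Require Import Arith List Permutation.
Import ListNotations.

(* [Es t u] represents t[x\u], where x is the index 0 bound in t. *)
Inductive term : Type :=
| Var : nat -> term
| Lam : term -> term
| App : term -> term -> term
| Es  : term -> term -> term.

Definition upren (f : nat -> nat) : nat -> nat :=
  fun i => match i with 0 => 0 | S i => S (f i) end.

Fixpoint ren (f : nat -> nat) (t : term) : term :=
  match t with
  | Var i => Var (f i)
  | Lam b => Lam (ren (upren f) b)
  | App a b => App (ren f a) (ren f b)
  | Es b u => Es (ren (upren f) b) (ren f u)
  end.

Definition lift (k : nat) (t : term) : term := ren (fun i => i + k) t.

Fixpoint occurs (k : nat) (t : term) : Prop :=
  match t with
  | Var i => i = k
  | Lam b => occurs (S k) b
  | App a b => occurs k a \/ occurs k b
  | Es b u => occurs (S k) b \/ occurs k u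
  end.

Definition is_value (t : term) : Prop := exists b, t = Lam b.

(** Substitution contexts S ::= <.> | S[x\u]; the head of the list is
    the outermost substitution. *)
Definition sctx := list term.
Fixpoint plugS (s : sctx) (t : term) : term :=
  match s with
  | [] => t
  | u :: s' => Es (plugS s' t) u
  end.

Inductive wctx : Type :=
| WHole : wctx
| WAppL : wctx -> term -> wctx
| WAppR : term -> wctx -> wctx
| WEsArg : term -> wctx -> wctx
| WEsBody : wctx -> term -> wctx.

(** Plugging (in de Bruijn notation, the plugged term is expressed in the
    scope of the hole). *)
Fixpoint plugW (w : wctx) (t : term) : term :=
  match w with
  | WHole => t
  | WAppL w' u => App (plugW w' t) u
  | WAppR u w' => App u (plugW w' t)
  | WEsArg u w' => Es u (plugW w' t)
  | WEsBody w' u => Es (plugW w' t) u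
  end.

(** Number of binders of W above its hole. *)
Fixpoint wdepth (w : wctx) : nat :=
  match w with
  | WHole => 0
  | WAppL w' _ => wdepth w'
  | WAppR _ w' => wdepth w'
  | WEsArg _ w' => wdepth w'
  | WEsBody w' _ => S (wdepth w')
  end.

(* S<\x.t> u  |->m  S<t[x\u]> *)
Inductive root_m : term -> term -> Prop :=
| Root_m : forall (s : sctx) (t u : term),
    root_m (App (plugS s (Lam t)) u) (plugS s (Es t (lift (length s) u))).

(* W<<x>>[x\u]  |->e  W<<u>>[x\u] *)
Inductive root_e : term -> term -> Prop :=
| Root_e : forall (w : wctx) (u : term),
    root_e (Es (plugW w (Var (wdepth w))) u)
           (Es (plugW w (lift (S (wdepth w)) u)) u).

(* t[x\S<v>]  |->gcv  S<t>   if x not in fv(t).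
   Since index 0 is not free in t, [ren pred t] is t with x removed
   from its scope; it is then lifted over the binders of S. *)
Inductive root_gcv : term -> term -> Prop :=
| Root_gcv : forall (s : sctx) (t v : term),
    is_value v -> ~ occurs 0 t ->
    root_gcv (Es t (plugS s v)) (plugS s (lift (length s) (ren pred t))).

Definition wclosure (r : term -> term -> Prop) (t u : term) : Prop :=
  exists (w : wctx) (t0 u0 : term), r t0 u0 /\ t = plugW w t0 /\ u = plugW w u0.

Definition wm := wclosure root_m.
Definition we := wclosure root_e.
Definition wgcv := wclosure root_gcv.

(* A multi type [L_i]_i is represented by a list, taken up to permutation:
   every rule below is stated modulo permutation (Permutation), so that
   derivability does not depend on the chosen representative. *)
Inductive ltype : Type :=
| TN : ltype
| TArr : list ltype -> ltype -> ltype.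

Definition mtype := list ltype.

(** Type contexts: index -> multi type (finite support for derivable
    judgements). *)
Definition ctx := nat -> mtype.
Definition ctx_eq (G D : ctx) : Prop := forall y, Permutation (G y) (D y).
Definition cempty : ctx := fun _ => [].
Definition csingle (x : nat) (L : ltype) : ctx :=
  fun y => if Nat.eqb y x then [L] else [].
Definition cunion (G D : ctx) : ctx := fun y => G y ++ D y.
(* Gamma \\ x for x the de Bruijn index 0 of the binder, re-indexed *)
Definition ctail (G : ctx) : ctx := fun y => G (S y).

(** Judgements [deriv G t m e s L]: there is a derivation of size s of
    G |-^(m,e) t : L; [mderiv] is the same for multi types (rule many,
    which is not counted in the size). *)
Inductive deriv : ctx -> term -> nat -> nat -> nat -> ltype -> Prop :=
| D_ax : forall G x L,
    ctx_eq G (csingle x L) ->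
    deriv G (Var x) 0 1 1 L
| D_axlam : forall G t,
    ctx_eq G cempty ->
    deriv G (Lam t) 0 0 1 TN
| D_lam : forall G G' t m e s L M,
    deriv G t m e s L ->
    Permutation M (G 0) ->
    ctx_eq G' (ctail G) ->
    deriv G' (Lam t) m e (S s) (TArr M L)
| D_app : forall G D G' t u m e s m' e' s' M M' L,
    deriv G t m e s (TArr M L) ->
    mderiv D u m' e' s' M' ->
    Permutation M' (M ++ [TN]) ->
    ctx_eq G' (cunion G D) ->
    deriv G' (App t u) (m + m' + 1) (e + e') (s + s' + 1) L
| D_es : forall G D G' t u m e s m' e' s' M' L,
    deriv G t m e s L ->
    mderiv D u m' e' s' M' ->
    Permutation M' (G 0 ++ [TN]) ->
    ctx_eq G' (cunion (ctail G) D) ->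
    deriv G' (Es t u) (m + m') (e + e') (s + s' + 1) L
with mderiv : ctx -> term -> nat -> nat -> nat -> mtype -> Prop :=
| M_nil : forall G t,
    ctx_eq G cempty ->
    mderiv G t 0 0 0 []
| M_cons : forall G G1 G2 t m1 e1 s1 m2 e2 s2 L M,
    deriv G1 t m1 e1 s1 L ->
    mderiv G2 t m2 e2 s2 M ->
    ctx_eq G (cunion G1 G2) ->
    mderiv G t (m1 + m2) (e1 + e2) (s1 + s2) (L :: M).

From Stdlib Require Import Arith List Permutation Lia.
Import ListNotations.

(* For [->m], the (@) rule
   at the redex and the (lambda) rule of the abstraction under [S] merge into
   one (ES) rule, losing one multiplicative step.  For [->e], the multi type
   [G 0 ++ [n]] of the argument [u] splits into the non-empty part [A] given to
   the substituted occurrence of [x] and the rest; the [length A] axioms typing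
   that occurrence are replaced by the derivations of [u] typing [A].  For
   [->gcv], relevance forces the argument [S<v>] to be typed by [[n]] alone, so
   the (ES) rule and the axiom typing [v] disappear.  Renaming moves
   derivations across the binders of [S] and [W].  All counts are additive,
   and in the silly system every argument position carries a multi type
   containing [n], so a redex in a weak context is typed at least once and the
   decrease at the root is inherited by the whole term. *)

Fixpoint ltype_eq_dec (x y : ltype) {struct x} : {x = y} + {x <> y}.
Proof.
  destruct x as [|M L], y as [|M' L']; try (right; discriminate); [left; reflexivity|].
  destruct (ltype_eq_dec L L') as [<-|HL]; [|right; congruence].
  destruct (list_eq_dec ltype_eq_dec M M') as [<-|HM]; [left; reflexivity|right; congruence].
Defined.

(* Two lists are permutations of each other iff all occurrence counts agree,
   so multiset bookkeeping on contexts reduces to linear arithmetic. *)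
Ltac multiset_solve :=
  apply (proj2 (Permutation_count_occ ltype_eq_dec _ _));
  let z := fresh "z" in intro z;
  repeat match goal with H : Permutation _ _ |- _ =>
    pose proof (proj1 (Permutation_count_occ ltype_eq_dec _ _) H z); clear H end;
  repeat rewrite count_occ_app in *; simpl in *; lia.

Lemma ctx_eq_refl G : ctx_eq G G.
Proof. intro; apply Permutation_refl. Qed.

Lemma ctx_eq_sym G D : ctx_eq G D -> ctx_eq D G.
Proof. intros H y; apply Permutation_sym, H. Qed.

Lemma ctx_eq_trans G D E : ctx_eq G D -> ctx_eq D E -> ctx_eq G E.
Proof. intros H1 H2 y; eapply Permutation_trans; [apply H1 | apply H2]. Qed.

Lemma ctx_eq_nil G D x : ctx_eq G D -> D x = [] -> G x = [].
Proof. intros H HD; apply Permutation_nil; rewrite <- HD; apply Permutation_sym, H. Qed.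

Lemma deriv_congr G G' t m e n L m' e' n' :
  deriv G t m e n L -> ctx_eq G G' -> m = m' -> e = e' -> n = n' -> deriv G' t m' e' n' L.
Proof.
  intros Hd HG <- <- <-.
  assert (HG' : forall D, ctx_eq G D -> ctx_eq G' D)
    by (intros D; apply ctx_eq_trans, ctx_eq_sym, HG).
  destruct Hd; [apply D_ax | apply D_axlam | eapply D_lam | eapply D_app | eapply D_es]; eauto.
Qed.

Lemma mderiv_congr G G' t m e n M m' e' n' :
  mderiv G t m e n M -> ctx_eq G G' -> m = m' -> e = e' -> n = n' -> mderiv G' t m' e' n' M.
Proof.
  intros Hd HG <- <- <-.
  assert (HG' : forall D, ctx_eq G D -> ctx_eq G' D)
    by (intros D; apply ctx_eq_trans, ctx_eq_sym, HG).
  destruct Hd; [apply M_nil | eapply M_cons]; eauto.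
Qed.

Scheme deriv_mut := Induction for deriv Sort Prop
with mderiv_mut := Induction for mderiv Sort Prop.
Combined Scheme deriv_mderiv_mut from deriv_mut, mderiv_mut.

(** * Renaming *)

(* Renamings need not be injective ([pred] in the gc rule), so contexts are
   pushed forward along explicit enumerations of the fibres. *)
Definition fiber_enum (f : nat -> nat) (pre : nat -> list nat) : Prop :=
  forall y, NoDup (pre y) /\ forall x, In x (pre y) <-> f x = y.

Definition ctx_push (pre : nat -> list nat) (G : ctx) : ctx :=
  fun y => concat (map G (pre y)).

Definition fiber_up (pre : nat -> list nat) : nat -> list nat :=
  fun y => match y with 0 => [0] | S y => map S (pre y) end.

Lemma fiber_enum_upren f pre : fiber_enum f pre -> fiber_enum (upren f) (fiber_up pre).
Proof.
  intros H [|y]; simpl.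
  - split; [repeat constructor; auto|].
    intros x; split; [intros [<-|[]]; reflexivity | destruct x; simpl; [auto | discriminate]].
  - destruct (H y) as [Hn Hi]. split.
    + apply FinFun.Injective_map_NoDup; [intros a b; congruence | assumption].
    + intros x; rewrite in_map_iff; split.
      * intros [x' [<- Hx']]. simpl. f_equal. apply Hi; assumption.
      * destruct x; simpl; [discriminate|]. intros Hx; exists x; split; auto. apply Hi; congruence.
Qed.

Lemma ctx_push_congr pre G D : ctx_eq G D -> ctx_eq (ctx_push pre G) (ctx_push pre D).
Proof.
  intros H y; unfold ctx_push; induction (pre y); simpl; [constructor|].
  apply Permutation_app; auto.
Qed.

Lemma ctx_push_cunion pre G D :
  ctx_eq (ctx_push pre (cunion G D)) (cunion (ctx_push pre G) (ctx_push pre D)).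
Proof.
  intros y; unfold ctx_push, cunion; induction (pre y); simpl; [constructor|].
  rewrite IHl. multiset_solve.
Qed.

Lemma ctx_push_cempty pre : ctx_eq (ctx_push pre cempty) cempty.
Proof. intros y; unfold ctx_push, cempty; induction (pre y); simpl; auto. Qed.

Lemma concat_map_csingle x L l : NoDup l ->
  concat (map (csingle x L) l) = if in_dec Nat.eq_dec x l then [L] else [].
Proof.
  induction 1 as [|x' l Hx' _ IH]; simpl; auto.
  rewrite IH; unfold csingle at 1.
  destruct (Nat.eqb_spec x' x), (Nat.eq_dec x' x), (in_dec Nat.eq_dec x l);
    subst; simpl; tauto || congruence.
Qed.

Lemma ctx_push_csingle f pre x L :
  fiber_enum f pre -> ctx_eq (ctx_push pre (csingle x L)) (csingle (f x) L).
Proof.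
  intros H y. unfold ctx_push. destruct (H y) as [Hn Hi]. rewrite concat_map_csingle by auto.
  unfold csingle. destruct (in_dec Nat.eq_dec x (pre y)) as [Hx|Hx].
  - apply Hi in Hx; subst; rewrite Nat.eqb_refl; apply Permutation_refl.
  - destruct (Nat.eqb_spec y (f x)); [|apply Permutation_refl]. exfalso; apply Hx, Hi; auto.
Qed.

Lemma ctail_ctx_push pre G : ctx_eq (ctail (ctx_push (fiber_up pre) G)) (ctx_push pre (ctail G)).
Proof. intros y; unfold ctail, ctx_push; simpl. rewrite map_map. apply Permutation_refl. Qed.

Lemma ren_typing :
  (forall G t m e n L, deriv G t m e n L ->
     forall f pre, fiber_enum f pre -> deriv (ctx_push pre G) (ren f t) m e n L) /\
  (forall G t m e n M, mderiv G t m e n M ->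
     forall f pre, fiber_enum f pre -> mderiv (ctx_push pre G) (ren f t) m e n M).
Proof.
  apply deriv_mderiv_mut; intros; simpl;
    match goal with H : ctx_eq _ _ |- _ => pose proof (ctx_push_congr pre _ _ H) end.
  - apply D_ax. eapply ctx_eq_trans; [eassumption | apply ctx_push_csingle; auto].
  - apply D_axlam. eapply ctx_eq_trans; [eassumption | apply ctx_push_cempty].
  - eapply D_lam; [apply H; apply fiber_enum_upren; eauto | |].
    + unfold ctx_push; simpl; rewrite app_nil_r; assumption.
    + eapply ctx_eq_trans; [eassumption | apply ctx_eq_sym, ctail_ctx_push].
  - eapply D_app; eauto.
    eapply ctx_eq_trans; [eassumption | apply ctx_push_cunion].
  - eapply D_es; [apply H; apply fiber_enum_upren; eauto | apply H0; eauto | |].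
    + unfold ctx_push; simpl; rewrite app_nil_r; assumption.
    + eapply ctx_eq_trans; [eassumption|].
      eapply ctx_eq_trans; [apply ctx_push_cunion|].
      intros y; apply Permutation_app; [apply Permutation_sym, ctail_ctx_push | reflexivity].
  - apply M_nil. eapply ctx_eq_trans; [eassumption | apply ctx_push_cempty].
  - eapply M_cons; eauto.
    eapply ctx_eq_trans; [eassumption | apply ctx_push_cunion].
Qed.

Lemma deriv_ren G t m e n L : deriv G t m e n L ->
  forall f pre, fiber_enum f pre -> deriv (ctx_push pre G) (ren f t) m e n L.
Proof. apply ren_typing. Qed.

Lemma mderiv_ren G t m e n M : mderiv G t m e n M ->
  forall f pre, fiber_enum f pre -> mderiv (ctx_push pre G) (ren f t) m e n M.
Proof. apply ren_typing. Qed.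

Definition lift_fibers (k : nat) : nat -> list nat :=
  fun y => if y <? k then [] else [y - k].

Lemma lift_fibers_enum k : fiber_enum (fun i => i + k) (lift_fibers k).
Proof.
  intros y; unfold lift_fibers. destruct (Nat.ltb_spec y k).
  - split; [constructor|]. intros x; simpl; split; [tauto | lia].
  - split; [repeat constructor; simpl; tauto|].
    intros x; simpl; split; [intros [<-|[]]; lia | lia].
Qed.

Lemma ctx_push_lift_lt k G y : y < k -> ctx_push (lift_fibers k) G y = [].
Proof.
  intros H; unfold ctx_push, lift_fibers; destruct (Nat.ltb_spec y k); [reflexivity | lia].
Qed.

Lemma ctx_push_lift_ge k G y : ctx_push (lift_fibers k) G (y + k) = G y.
Proof.
  unfold ctx_push, lift_fibers. destruct (Nat.ltb_spec (y + k) k); [lia|].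
  replace (y + k - k) with y by lia. apply app_nil_r.
Qed.

Definition pred_fibers : nat -> list nat :=
  fun y => match y with 0 => [0; 1] | S y => [S (S y)] end.

Lemma pred_fibers_enum : fiber_enum pred pred_fibers.
Proof.
  intros [|y]; simpl.
  - split; [repeat constructor; simpl; intuition discriminate|].
    intros [|[|x]]; simpl; intuition discriminate.
  - split; [repeat constructor; simpl; tauto|].
    intros [|[|x]]; simpl; intuition congruence.
Qed.

Lemma ctx_push_pred G : G 0 = [] -> forall y, Permutation (ctx_push pred_fibers G y) (G (S y)).
Proof.
  intros H0 [|y]; unfold ctx_push; simpl; rewrite ?H0; simpl; rewrite app_nil_r; reflexivity.
Qed.

(** * Relevance and multi derivations *)

Lemma deriv_ctx_nil_of_not_occurs G t m e n L :
  deriv G t m e n L -> forall x, ~ occurs x t -> G x = [].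
Proof.
  revert G t m e n L.
  apply (deriv_mut (fun G t _ _ _ _ _ => forall x, ~ occurs x t -> G x = [])
                   (fun G t _ _ _ _ _ => forall x, ~ occurs x t -> G x = []));
    intros; simpl in *; eapply ctx_eq_nil; try eassumption; unfold cunion, ctail, cempty.
  - unfold csingle; destruct (Nat.eqb_spec x0 x); congruence.
  - reflexivity.
  - auto.
  - rewrite H, H0 by tauto; reflexivity.
  - rewrite H, H0 by tauto; reflexivity.
  - reflexivity.
  - rewrite H, H0 by tauto; reflexivity.
Qed.

Lemma mderiv_nil_inv G t m e n :
  mderiv G t m e n [] -> ctx_eq G cempty /\ m = 0 /\ e = 0 /\ n = 0.
Proof. inversion 1; auto. Qed.

Lemma mderiv_perm M M' G t m e n :
  Permutation M M' -> mderiv G t m e n M -> mderiv G t m e n M'.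
Proof.
  intros HM; revert G m e n; induction HM; intros G m e n Hd; auto.
  - inversion Hd; subst. eapply M_cons; eauto.
  - inversion Hd as [|? G1 G2 ? m1 e1 n1 m2 e2 n2 ? ? Hd1 Hd2 HG]; subst.
    inversion Hd2 as [|? G3 G4 ? m3 e3 n3 m4 e4 n4 ? ? Hd3 Hd4 HG2]; subst.
    pose proof (M_cons _ _ _ _ _ _ _ _ _ _ _ _ Hd1 Hd4 (ctx_eq_refl _)) as Hd14.
    eapply mderiv_congr; [eapply M_cons; [exact Hd3 | exact Hd14 | apply ctx_eq_refl] | | lia..].
    intros z; specialize (HG z); specialize (HG2 z); unfold cunion in *. multiset_solve.
Qed.

Lemma mderiv_app_inv A B G t m e n : mderiv G t m e n (A ++ B) ->
  exists GA GB mA eA nA mB eB nB,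
    mderiv GA t mA eA nA A /\ mderiv GB t mB eB nB B /\ ctx_eq G (cunion GA GB) /\
    m = mA + mB /\ e = eA + eB /\ n = nA + nB.
Proof.
  revert G m e n; induction A as [|L A IH]; simpl; intros G m e n Hd.
  - exists cempty, G, 0, 0, 0, m, e, n.
    repeat split; auto; [apply M_nil, ctx_eq_refl | intro; reflexivity].
  - inversion Hd as [|? G1 G2 ? m1 e1 n1 m2 e2 n2 ? ? Hd1 Hd2 HG]; subst.
    apply IH in Hd2 as (GA&GB&mA&eA&nA&mB&eB&nB&HA&HB&HG2&->&->&->).
    exists (cunion G1 GA), GB, (m1 + mA), (e1 + eA), (n1 + nA), mB, eB, nB.
    split; [eapply M_cons; [eassumption | eassumption | apply ctx_eq_refl]|].
    split; [assumption|]. split; [|lia].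
    intros z; specialize (HG z); specialize (HG2 z); unfold cunion in *. multiset_solve.
Qed.

Lemma perm_app_TN_neq_nil (M' M : mtype) : Permutation M' (M ++ [TN]) -> M' <> [].
Proof. intros H ->. apply Permutation_nil, app_eq_nil in H as [_ H]; discriminate. Qed.

(** * Substitution contexts *)

Definition ctx_drop (k : nat) (G : ctx) : ctx := fun y => G (y + k).

Lemma deriv_plugS_split s X G m e n L : deriv G (plugS s X) m e n L ->
  exists H K mX eX nX mK eK nK,
    deriv H X mX eX nX L /\ ctx_eq G (cunion (ctx_drop (length s) H) K) /\
    m = mX + mK /\ e = eX + eK /\ n = nX + nK /\
    forall Y H' mY eY nY L', deriv H' Y mY eY nY L' ->
      (forall y, y < length s -> Permutation (H' y) (H y)) ->
      deriv (cunion (ctx_drop (length s) H') K) (plugS s Y) (mY + mK) (eY + eK) (nY + nK) L'.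
Proof.
  revert X G m e n L; induction s as [|u s IH]; simpl; intros X G m e n L Hd.
  - assert (Hdrop : forall H, ctx_eq H (cunion (ctx_drop 0 H) cempty)).
    { intros H y; unfold cunion, ctx_drop, cempty; rewrite Nat.add_0_r, app_nil_r; reflexivity. }
    exists G, cempty, m, e, n, 0, 0, 0.
    repeat split; auto; try lia.
    intros Y H' mY eY nY L' HY _. eapply deriv_congr; [eassumption | apply Hdrop | lia | lia | lia].
  - inversion Hd as [| | | |G1 D ? ? ? m1 e1 n1 m2 e2 n2 M' ? Hd1 Hd2 HM HG]; subst.
    apply IH in Hd1 as (H&K&mX&eX&nX&mK&eK&nK&HX&HGX&->&->&->&Hfill).
    exists H, (cunion (ctail K) D), mX, eX, nX, (mK + m2), (eK + e2), (nK + n2 + 1).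
    split; [auto|]. split.
    { intros y. specialize (HG y); specialize (HGX (S y)). unfold cunion, ctail, ctx_drop in *.
      replace (S y + length s) with (y + S (length s)) in HGX by lia. multiset_solve. }
    split; [lia|]. split; [lia|]. split; [lia|].
    intros Y H' mY eY nY L' HY Hagree.
    pose proof (Hfill Y H' mY eY nY L' HY (fun y Hy => Hagree y (le_S _ _ Hy))) as HY'.
    eapply deriv_congr; [eapply D_es; [exact HY' | exact Hd2 | | apply ctx_eq_refl] |
      | lia..].
    + specialize (Hagree (length s) (Nat.lt_succ_diag_r _)); specialize (HGX 0).
      unfold cunion, ctx_drop in *; simpl in *. multiset_solve.
    + intros y; unfold cunion, ctail, ctx_drop.
      replace (S y + length s) with (y + S (length s)) by lia. multiset_solve.
Qed.

(** * Root steps *)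

Definition cost_rel : Type := nat -> nat -> nat -> nat -> nat -> nat -> Prop.

Definition preserves (R : cost_rel) (t u : term) : Prop :=
  forall G m e n L, deriv G t m e n L ->
    exists m' e' n', deriv G u m' e' n' L /\ R m e n m' e' n'.

Definition additive (R : cost_rel) : Prop :=
  (forall m e n m' e' n' a b c, R m e n m' e' n' ->
     R (a + m) (b + e) (c + n) (a + m') (b + e') (c + n')) /\
  (forall m1 e1 n1 m1' e1' n1' m2 e2 n2 m2' e2' n2',
     R m1 e1 n1 m1' e1' n1' -> R m2 e2 n2 m2' e2' n2' ->
     R (m1 + m2) (e1 + e2) (n1 + n2) (m1' + m2') (e1' + e2') (n1' + n2')).

Definition m_decreases : cost_rel := fun m e _ m' e' _ => m' < m /\ e' = e.
Definition e_decreases : cost_rel := fun m e _ m' e' _ => e' < e /\ m' = m.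
Definition size_decreases : cost_rel := fun m e n m' e' n' => n' < n /\ m' = m /\ e' = e.

Lemma m_decreases_additive : additive m_decreases.
Proof. unfold m_decreases; split; intros; lia. Qed.

Lemma e_decreases_additive : additive e_decreases.
Proof. unfold e_decreases; split; intros; lia. Qed.

Lemma size_decreases_additive : additive size_decreases.
Proof. unfold size_decreases; split; intros; lia. Qed.

Lemma root_m_decreases t u : root_m t u -> preserves m_decreases t u.
Proof.
  intros [s b u'] G m e n L Hd.
  inversion Hd as [| | |G1 D ? ? ? m1 e1 n1 m2 e2 n2 M M' ? Hd1 Hd2 HM HG|]; subst.
  apply deriv_plugS_split in Hd1 as (H&K&mX&eX&nX&mK&eK&nK&HX&HGX&->&->&->&Hfill).
  inversion HX as [| |Hb ? ? mb eb nb ? ? Hdb HMb HH| |]; subst.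
  pose proof (mderiv_ren _ _ _ _ _ _ Hd2 _ _ (lift_fibers_enum (length s))) as Hu.
  assert (Hes : deriv (cunion (ctail Hb) (ctx_push (lift_fibers (length s)) D))
                  (Es b (lift (length s) u')) (mX + m2) (eX + e2) (nb + n2 + 1) L).
  { eapply D_es; [exact Hdb | exact Hu | | apply ctx_eq_refl]. rewrite HM. multiset_solve. }
  eapply Hfill in Hes.
  - exists (mX + m2 + mK), (eX + e2 + eK), (nb + n2 + 1 + nK). split; [|unfold m_decreases; lia].
    eapply deriv_congr; [exact Hes |
      | lia..].
    intros y. specialize (HG y); specialize (HGX y); specialize (HH (y + length s)).
    unfold cunion, ctail, ctx_drop in *. rewrite ctx_push_lift_ge in *. multiset_solve.
  - intros y Hy. specialize (HH y). unfold cunion, ctail in *.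
    rewrite ctx_push_lift_lt by auto. multiset_solve.
Qed.

Lemma root_gcv_decreases t u : root_gcv t u -> preserves size_decreases t u.
Proof.
  intros [s b v [b' ->] Hocc] G m e n L Hd.
  inversion Hd as [| | | |Gb D ? ? ? mb eb nb m2 e2 n2 M' ? Hdb Hd2 HM HG]; subst.
  assert (Gb0 : Gb 0 = []) by (eapply deriv_ctx_nil_of_not_occurs; eauto).
  rewrite Gb0 in HM; simpl in HM.
  apply Permutation_sym, Permutation_length_1_inv in HM; subst.
  inversion Hd2 as [|? D1 D2 ? m1 e1 n1 m3 e3 n3 ? ? Hd3 Hnil HD]; subst.
  apply mderiv_nil_inv in Hnil as (HD2&->&->&->).
  apply deriv_plugS_split in Hd3 as (H&K&mX&eX&nX&mK&eK&nK&HX&HGX&->&->&->&Hfill).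
  inversion HX as [|? ? HH| | |]; subst.
  pose proof (deriv_ren _ _ _ _ _ _ Hdb _ _ pred_fibers_enum) as Hb1.
  pose proof (deriv_ren _ _ _ _ _ _ Hb1 _ _ (lift_fibers_enum (length s))) as Hb2.
  apply Hfill in Hb2.
  - exists (mb + mK), (eb + eK), (nb + nK). split; [|unfold size_decreases; lia].
    eapply deriv_congr; [exact Hb2 |
      | lia..].
    intros y. specialize (HG y); specialize (HGX y); specialize (HH (y + length s)).
    specialize (HD y); specialize (HD2 y). pose proof (ctx_push_pred _ Gb0 y).
    unfold cunion, ctail, cempty, ctx_drop in *. rewrite ctx_push_lift_ge in *. multiset_solve.
  - intros y Hy. specialize (HH y). unfold cempty in *.
    rewrite ctx_push_lift_lt by auto. multiset_solve.
Qed.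

(** * Typing the hole of a weak context *)

Definition ctx_add_at (G : ctx) (k : nat) (A : mtype) : ctx :=
  fun y => G y ++ (if y =? k then A else []).

(* A derivation of [W<<x_k>>] assigns the non-empty multi type [A] to the
   occurrence of [x_k] in the hole; any [Y] typed by [A] in a context that
   ignores the variables bound by [W] can take its place, at the cost of the
   [length A] axioms typing that occurrence. *)
Definition hole_typing (w : wctx) (k : nat) (G : ctx) (m e : nat) (L : ltype) : Prop :=
  exists A G0 e0, A <> [] /\ ctx_eq G (ctx_add_at G0 k A) /\ e = e0 + length A /\
    forall Y HY mY eY nY, mderiv HY Y mY eY nY A -> (forall y, y < wdepth w -> HY y = []) ->
      exists n', deriv (cunion G0 (ctx_drop (wdepth w) HY)) (plugW w Y) (m + mY) (e0 + eY) n' L.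

Definition mhole_typing (w : wctx) (k : nat) (G : ctx) (m e : nat) (M : mtype) : Prop :=
  exists A G0 e0, (M <> [] -> A <> []) /\ ctx_eq G (ctx_add_at G0 k A) /\ e = e0 + length A /\
    forall Y HY mY eY nY, mderiv HY Y mY eY nY A -> (forall y, y < wdepth w -> HY y = []) ->
      exists n', mderiv (cunion G0 (ctx_drop (wdepth w) HY)) (plugW w Y) (m + mY) (e0 + eY) n' M.

Definition hole_typable (w : wctx) (k : nat) : Prop :=
  forall G m e n L, deriv G (plugW w (Var (wdepth w + k))) m e n L -> hole_typing w k G m e L.

Lemma nil_perm_app (l l1 l2 : list ltype) :
  l = [] -> Permutation l (l1 ++ l2) -> l1 = [] /\ l2 = [].
Proof. intros -> H; apply app_eq_nil, Permutation_nil, H. Qed.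

Lemma mhole_typing_of_typable w k D m e n M : hole_typable w k ->
  mderiv D (plugW w (Var (wdepth w + k))) m e n M -> mhole_typing w k D m e M.
Proof.
  intros Hw Hd. remember (plugW w (Var (wdepth w + k))) as T eqn:ET.
  induction Hd as [G T HG|G G1 G2 T m1 e1 n1 m2 e2 n2 L M Hd1 Hd2 IH HG]; subst.
  - exists [], G, 0. split; [tauto|]. split.
    { intros y; unfold ctx_add_at; destruct (y =? k); rewrite app_nil_r; reflexivity. }
    split; [reflexivity|]. intros Y HY mY eY nY HYd _.
    apply mderiv_nil_inv in HYd as (HY0&->&->&->). exists 0.
    apply M_nil. intros y; specialize (HG y); specialize (HY0 (y + wdepth w)).
    unfold cunion, ctx_drop, cempty in *. multiset_solve.
  - destruct (Hw _ _ _ _ _ Hd1) as (A1&G01&e01&HA1&HG1&He1&Hfill1).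
    destruct (IH eq_refl) as (A2&G02&e02&HA2&HG2&He2&Hfill2).
    exists (A1 ++ A2), (cunion G01 G02), (e01 + e02). split.
    { intros _; destruct A1; [congruence | discriminate]. } split.
    { intros y; specialize (HG y); specialize (HG1 y); specialize (HG2 y).
      unfold ctx_add_at, cunion in *. destruct (y =? k); multiset_solve. }
    split; [rewrite length_app; lia|].
    intros Y HY mY eY nY HYd HY0.
    apply mderiv_app_inv in HYd as (HY1&HY2&mA&eA&nA&mB&eB&nB&HYd1&HYd2&HYc&->&->&->).
    assert (Hnil : forall y, y < wdepth w -> HY1 y = [] /\ HY2 y = [])
      by (intros y Hy; exact (nil_perm_app _ _ _ (HY0 y Hy) (HYc y))).
    destruct (Hfill1 Y HY1 mA eA nA HYd1 (fun y Hy => proj1 (Hnil y Hy))) as [n1' D1].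
    destruct (Hfill2 Y HY2 mB eB nB HYd2 (fun y Hy => proj2 (Hnil y Hy))) as [n2' D2].
    exists (n1' + n2').
    eapply mderiv_congr; [eapply M_cons; [exact D1 | exact D2 | apply ctx_eq_refl] |
      | lia..].
    intros y; specialize (HYc (y + wdepth w)). unfold cunion, ctx_drop in *. multiset_solve.
Qed.

Lemma hole_typable_WHole k : hole_typable WHole k.
Proof.
  intros G m e n L Hd; simpl in Hd.
  inversion Hd as [? ? ? HG| | | |]; subst.
  exists [L], cempty, 0. split; [discriminate|]. split.
  { intros y; specialize (HG y); unfold ctx_add_at, csingle, cempty in *; simpl.
    destruct (y =? k); multiset_solve. }
  split; [reflexivity|]. intros Y HY mY eY nY HYd _.
  inversion HYd as [|? G1 G2 ? m1 e1 n1 m2 e2 n2 ? ? Hd1 Hnil HG']; subst.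
  apply mderiv_nil_inv in Hnil as (HG2&->&->&->). exists n1. simpl.
  eapply deriv_congr; [exact Hd1 |
      | lia..].
  intros y; specialize (HG' y); specialize (HG2 y).
  unfold cunion, ctx_drop, cempty in *; rewrite Nat.add_0_r; multiset_solve.
Qed.

Lemma hole_typable_WAppL w u k : hole_typable w k -> hole_typable (WAppL w u) k.
Proof.
  intros Hw G m e n L Hd; simpl in Hd.
  inversion Hd as [| | |G1 D ? ? ? m1 e1 n1 m2 e2 n2 M M' ? Hd1 Hd2 HM HG|]; subst.
  destruct (Hw _ _ _ _ _ Hd1) as (A&G0&e0&HA&HG0&He&Hfill).
  exists A, (cunion G0 D), (e0 + e2). split; [auto|]. split.
  { intros y; specialize (HG y); specialize (HG0 y). unfold ctx_add_at, cunion in *.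
    destruct (y =? k); multiset_solve. }
  split; [lia|]. intros Y HY mY eY nY HYd HY0.
  destruct (Hfill Y HY mY eY nY HYd HY0) as [n' HD]. exists (n' + n2 + 1).
  eapply deriv_congr; [eapply D_app; [exact HD | exact Hd2 | exact HM | apply ctx_eq_refl] |
      | lia..].
  intros y; unfold cunion. multiset_solve.
Qed.

Lemma hole_typable_WAppR u w k : hole_typable w k -> hole_typable (WAppR u w) k.
Proof.
  intros Hw G m e n L Hd; simpl in Hd.
  inversion Hd as [| | |G1 D ? ? ? m1 e1 n1 m2 e2 n2 M M' ? Hd1 Hd2 HM HG|]; subst.
  destruct (mhole_typing_of_typable _ _ _ _ _ _ _ Hw Hd2) as (A&G0&e0&HA&HG0&He&Hfill).
  exists A, (cunion G1 G0), (e1 + e0). split; [exact (HA (perm_app_TN_neq_nil _ _ HM))|]. split.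
  { intros y; specialize (HG y); specialize (HG0 y). unfold ctx_add_at, cunion in *.
    destruct (y =? k); multiset_solve. }
  split; [lia|]. intros Y HY mY eY nY HYd HY0.
  destruct (Hfill Y HY mY eY nY HYd HY0) as [n' HD]. exists (n1 + n' + 1).
  eapply deriv_congr; [eapply D_app; [exact Hd1 | exact HD | exact HM | apply ctx_eq_refl] |
      | lia..].
  intros y; unfold cunion. multiset_solve.
Qed.

Lemma hole_typable_WEsArg u w k : hole_typable w k -> hole_typable (WEsArg u w) k.
Proof.
  intros Hw G m e n L Hd; simpl in Hd.
  inversion Hd as [| | | |G1 D ? ? ? m1 e1 n1 m2 e2 n2 M' ? Hd1 Hd2 HM HG]; subst.
  destruct (mhole_typing_of_typable _ _ _ _ _ _ _ Hw Hd2) as (A&G0&e0&HA&HG0&He&Hfill).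
  exists A, (cunion (ctail G1) G0), (e1 + e0).
  split; [exact (HA (perm_app_TN_neq_nil _ _ HM))|]. split.
  { intros y; specialize (HG y); specialize (HG0 y). unfold ctx_add_at, cunion, ctail in *.
    destruct (y =? k); multiset_solve. }
  split; [lia|]. intros Y HY mY eY nY HYd HY0.
  destruct (Hfill Y HY mY eY nY HYd HY0) as [n' HD]. exists (n1 + n' + 1).
  eapply deriv_congr; [eapply D_es; [exact Hd1 | exact HD | exact HM | apply ctx_eq_refl] |
      | lia..].
  intros y; unfold cunion, ctail. multiset_solve.
Qed.

Lemma hole_typable_WEsBody w u k : hole_typable w (S k) -> hole_typable (WEsBody w u) k.
Proof.
  intros Hw G m e n L Hd; simpl in Hd.
  replace (S (wdepth w + k)) with (wdepth w + S k) in Hd by lia.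
  inversion Hd as [| | | |G1 D ? ? ? m1 e1 n1 m2 e2 n2 M' ? Hd1 Hd2 HM HG]; subst.
  destruct (Hw _ _ _ _ _ Hd1) as (A&G0&e0&HA&HG0&He&Hfill).
  exists A, (cunion (ctail G0) D), (e0 + e2). split; [auto|]. split.
  { intros y; specialize (HG y); specialize (HG0 (S y)). unfold ctx_add_at, cunion, ctail in *.
    simpl in HG0. destruct (y =? k); multiset_solve. }
  split; [lia|]. intros Y HY mY eY nY HYd HY0.
  destruct (Hfill Y HY mY eY nY HYd (fun y Hy => HY0 y (le_S _ _ Hy))) as [n' HD].
  exists (n' + n2 + 1).
  eapply deriv_congr; [eapply D_es; [exact HD | exact Hd2 | | apply ctx_eq_refl] |
      | lia..].
  - specialize (HG0 0). unfold ctx_add_at, cunion, ctx_drop in *; simpl in *.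
    rewrite (HY0 (wdepth w)) by (simpl; lia). multiset_solve.
  - intros y; unfold cunion, ctail, ctx_drop.
    replace (S y + wdepth w) with (y + S (wdepth w)) by lia. multiset_solve.
Qed.

Lemma hole_typable_all w : forall k, hole_typable w k.
Proof.
  induction w; intros k.
  - apply hole_typable_WHole.
  - apply hole_typable_WAppL; auto.
  - apply hole_typable_WAppR; auto.
  - apply hole_typable_WEsArg; auto.
  - apply hole_typable_WEsBody; auto.
Qed.

Lemma root_e_decreases t u : root_e t u -> preserves e_decreases t u.
Proof.
  intros [w u'] G m e n L Hd.
  inversion Hd as [| | | |G1 D ? ? ? m1 e1 n1 m2 e2 n2 M' ? Hd1 Hd2 HM HG]; subst.
  rewrite <- (Nat.add_0_r (wdepth w)) in Hd1.
  destruct (hole_typable_all w 0 _ _ _ _ _ Hd1) as (A&G0&e0&HA&HG0&He&Hfill).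
  assert (HMA : Permutation M' (A ++ (G0 0 ++ [TN]))).
  { specialize (HG0 0). unfold ctx_add_at in HG0. simpl in HG0. multiset_solve. }
  apply (mderiv_perm _ _ _ _ _ _ _ HMA) in Hd2.
  apply mderiv_app_inv in Hd2 as (DA&DR&mA&eA&nA&mR&eR&nR&HdA&HdR&HD&->&->&->).
  pose proof (mderiv_ren _ _ _ _ _ _ HdA _ _ (lift_fibers_enum (S (wdepth w)))) as HdA'.
  destruct (Hfill _ _ _ _ _ HdA') as [n' Hd'].
  { intros y Hy. apply ctx_push_lift_lt. lia. }
  exists (m1 + mA + mR), (e0 + eA + eR), (n' + nR + 1). split.
  2:{ unfold e_decreases. destruct A; [congruence|]. simpl in He. lia. }
  eapply deriv_congr; [eapply D_es; [exact Hd' | exact HdR | | apply ctx_eq_refl] |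
      | lia..].
  - unfold cunion, ctx_drop; simpl. rewrite ctx_push_lift_lt, app_nil_r by lia. reflexivity.
  - intros y. specialize (HG y); specialize (HG0 (S y)); specialize (HD y).
    unfold cunion, ctail, ctx_add_at, ctx_drop in *. simpl in HG0.
    replace (S y + wdepth w) with (y + S (wdepth w)) by lia. rewrite ctx_push_lift_ge.
    multiset_solve.
Qed.

(** * Closure under weak contexts *)

Lemma additive_shift R m e n m' e' n' X Y Z X' Y' Z' : additive R ->
  R m e n m' e' n' ->
  m <= X -> m' <= X' -> X - m = X' - m' ->
  e <= Y -> e' <= Y' -> Y - e = Y' - e' ->
  n <= Z -> n' <= Z' -> Z - n = Z' - n' -> R X Y Z X' Y' Z'.
Proof.
  intros [Hshift _] HR; intros.
  replace X with ((X - m) + m) by lia. replace X' with ((X - m) + m') by lia.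
  replace Y with ((Y - e) + e) by lia. replace Y' with ((Y - e) + e') by lia.
  replace Z with ((Z - n) + n) by lia. replace Z' with ((Z - n) + n') by lia.
  apply Hshift; auto.
Qed.

(* [R] is strict, so the empty derivation, which stays unchanged, is set apart. *)
Lemma mderiv_preserves R t u D m e n M : additive R -> preserves R t u ->
  mderiv D t m e n M ->
  exists m' e' n', mderiv D u m' e' n' M /\
    (M = [] /\ m' = m /\ e' = e /\ n' = n \/ R m e n m' e' n').
Proof.
  intros HR Htu Hd.
  induction Hd as [G t HG|G G1 G2 t m1 e1 n1 m2 e2 n2 L M Hd1 Hd2 IH HG].
  - exists 0, 0, 0. split; [apply M_nil; auto | left; auto].
  - destruct (Htu _ _ _ _ _ Hd1) as (m1'&e1'&n1'&Hd1'&R1).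
    destruct (IH Htu) as (m2'&e2'&n2'&Hd2'&R2).
    exists (m1' + m2'), (e1' + e2'), (n1' + n2'). split; [eapply M_cons; eauto|]. right.
    destruct R2 as [(_&->&->&->)|R2].
    + eapply additive_shift; eauto; lia.
    + apply HR; auto.
Qed.

Lemma plugW_preserves R t u w : additive R -> preserves R t u ->
  preserves R (plugW w t) (plugW w u).
Proof.
  intros HR Htu.
  induction w as [|w IH u'|u' w IH|u' w IH|w IH u']; intros G m e n L Hd; simpl in *; auto.
  - inversion Hd as [| | |G1 D ? ? ? m1 e1 n1 m2 e2 n2 M M' ? Hd1 Hd2 HM HG|]; subst.
    destruct (IH _ _ _ _ _ Hd1) as (m'&e'&n'&Hd1'&R1).
    exists (m' + m2 + 1), (e' + e2), (n' + n2 + 1). split; [eapply D_app; eauto|].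
    eapply additive_shift; eauto; lia.
  - inversion Hd as [| | |G1 D ? ? ? m1 e1 n1 m2 e2 n2 M M' ? Hd1 Hd2 HM HG|]; subst.
    destruct (mderiv_preserves R _ _ _ _ _ _ _ HR IH Hd2) as (m'&e'&n'&Hd2'&R2).
    exists (m1 + m' + 1), (e1 + e'), (n1 + n' + 1). split; [eapply D_app; eauto|].
    destruct R2 as [(Hnil & _)|R2]; [exfalso; eapply perm_app_TN_neq_nil; eauto|].
    eapply additive_shift; eauto; lia.
  - inversion Hd as [| | | |G1 D ? ? ? m1 e1 n1 m2 e2 n2 M' ? Hd1 Hd2 HM HG]; subst.
    destruct (mderiv_preserves R _ _ _ _ _ _ _ HR IH Hd2) as (m'&e'&n'&Hd2'&R2).
    exists (m1 + m'), (e1 + e'), (n1 + n' + 1). split; [eapply D_es; eauto|].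
    destruct R2 as [(Hnil & _)|R2]; [exfalso; eapply perm_app_TN_neq_nil; eauto|].
    eapply additive_shift; eauto; lia.
  - inversion Hd as [| | | |G1 D ? ? ? m1 e1 n1 m2 e2 n2 M' ? Hd1 Hd2 HM HG]; subst.
    destruct (IH _ _ _ _ _ Hd1) as (m'&e'&n'&Hd1'&R1).
    exists (m' + m2), (e' + e2), (n' + n2 + 1). split; [eapply D_es; eauto|].
    eapply additive_shift; eauto; lia.
Qed.

Lemma wclosure_preserves {R : cost_rel} {r : term -> term -> Prop} {t u : term} : additive R ->
  (forall t0 u0, r t0 u0 -> preserves R t0 u0) -> wclosure r t u -> preserves R t u.
Proof. intros HR Hr (w & t0 & u0 & Hstep & -> & ->). apply plugW_preserves; auto. Qed.

Theorem proposition6p1 (G : ctx) (t : term) (m e s : nat) (L : ltype) :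
  deriv G t m e s L ->
  (forall u, wm t u ->
     1 <= m /\ exists m' s', deriv G u m' e s' L /\ m > m') /\
  (forall u, we t u ->
     1 <= e /\ exists e' s', deriv G u m e' s' L /\ e > e') /\
  (forall u, wgcv t u ->
     exists s', deriv G u m e s' L /\ s > s').
Proof.
  intros Hd; split; [|split]; intros u Hstep.
  - destruct (wclosure_preserves m_decreases_additive root_m_decreases Hstep _ _ _ _ _ Hd)
      as (m' & e' & s' & Hd' & Hlt & ->).
    split; [lia | eauto].
  - destruct (wclosure_preserves e_decreases_additive root_e_decreases Hstep _ _ _ _ _ Hd)
      as (m' & e' & s' & Hd' & Hlt & ->).
    split; [lia | eauto].
  - destruct (wclosure_preserves size_decreases_additive root_gcv_decreases Hstep _ _ _ _ _ Hd)
      as (m' & e' & s' & Hd' & Hlt & -> & ->).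
    eauto.
Qed.
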